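(* Let $p$ be the POP of length 4 defined by the relations $1>2$ and $4>3$; equivalently, avoiding $p$ means simultaneously avoiding the patterns $2134, 3124, 4123, 3214, 4213, 4312$. Let $a(n)=|S_n(p)|$. Then $a(0)=1$, and for $n\geq 1$, $a(n)=2a(n-1)+2^{n-1}-2$, so that $a(n)=(n-2)2^{n-1}+2$ for $n\geq 1$. Moreover, $$\sum_{n\geq 0}a(n)x^n=\frac{1-4x+5x^2}{(1-x)(1-2x)^2}.$$
   Context: An $n$-permutation is a word $\pi=\pi_1\cdots\pi_n$ containing each of $1,\ldots,n$ exactly once; $S_n$ is the set of $n$-permutations ($S_0$ consists of the empty permutation). A partially ordered pattern (POP) $p$ of length $k$ is a partial order on the label set $\{1,\ldots,k\}$; it is described by a set of generating relations, where a relation $x>y$ means that in an occurrence the entry in the $x$-th chosen position must be larger than the entry in the $y$-th chosen position, and labels not involved in any relation are unconstrained. An $n$-permutation $\pi$ contains $p$ if there are indices $1\leq i_1<\cdots<i_k\leq n$ such that $\pi_{i_x}>\pi_{i_y}$ whenever $x>y$ in the partial order; otherwise $\pi$ avoids $p$. $S_n(p)$ denotes the set of $n$-permutations avoiding $p$. A permutation $\pi$ avoids a classical pattern $q$ if it has no subsequence order-isomorphic to $q$. *)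

From HB Require Import structures.
From mathcomp Require Import all_boot all_order all_algebra all_fingroup.
Set Implicit Arguments. Unset Strict Implicit. Unset Printing Implicit Defensive.
Import Order.TTheory GRing.Theory Num.Theory.

(* An n-permutation is s : 'S_n, the word s 0, s 1, ..., s (n-1) over the
   values 0..n-1 (shifted by one from the paper's 1..n; only relative order
   matters). Positions and labels are 0-indexed. *)

(* A POP of length k, given by its generating relations: a pair (x, y)
   means "x > y" in the partial order. *)
Definition pop (k : nat) := seq ('I_k * 'I_k).

(* pi contains the POP: there are positions f 0 < ... < f (k-1) such that
   pi (f x) > pi (f y) for every generating relation x > y (equivalently,
   for every relation of the generated partial order, by transitivity). *)
Definition pop_contains (n k : nat) (s : 'S_n) (p : pop k) : bool :=
  [exists f : {ffun 'I_k -> 'I_n},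
     [forall x : 'I_k, forall y : 'I_k, (x < y)%N ==> (f x < f y)%N]
     && all (fun r : 'I_k * 'I_k => (s (f r.2) < s (f r.1))%N) p].

Definition pop_avoids (n k : nat) (s : 'S_n) (p : pop k) : bool :=
  ~~ pop_contains s p.

(* Classical pattern q, given as a word (e.g. [:: 2;1;3;4] for 2134). *)
Definition classical_contains (n : nat) (s : 'S_n) (q : seq nat) : bool :=
  [exists f : {ffun 'I_(size q) -> 'I_n},
     [forall x : 'I_(size q), forall y : 'I_(size q),
        ((x < y)%N ==> (f x < f y)%N)
        && ((s (f x) < s (f y))%N == (nth 0 q x < nth 0 q y)%N)]].

Definition classical_avoids (n : nat) (s : 'S_n) (q : seq nat) : bool :=
  ~~ classical_contains s q.

(* The POP of length 4 with relations 1 > 2 and 4 > 3 (0-indexed: 0>1, 3>2). *)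
Definition p4 : pop 4 :=
  [:: (@inord 3 0, @inord 3 1); (@inord 3 3, @inord 3 2)].

Definition a (n : nat) : nat := #|[set s : 'S_n | pop_avoids s p4]|.

Local Open Scope ring_scope.
Definition gf_num : {poly int} := 1 - 4%:R *: 'X + 5%:R *: 'X^2.
Definition gf_den : {poly int} := (1 - 'X) * (1 - 2%:R *: 'X) ^+ 2.

From mathcomp Require Import all_boot all_algebra all_fingroup.
From mathcomp Require Import zify ring.
Import GRing.Theory.
Set Implicit Arguments. Unset Strict Implicit. Unset Printing Implicit Defensive.

(* We count the avoiders of p by the position j of their minimal letter.
   Writing w = ins_min j w' (the word w' with a new minimum inserted at j):
   - if j is the first or the last position, w avoids p iff w' does;
   - if j is an inner position, w avoids p iff w' increases on its first j
     positions and decreases on the others ([updown]).  The same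
     decomposition shows that there are C(n, k) such permutations of length n.
   Hence a(n+2) = 2 a(n+1) + sum_(0<j<n+1) C(n+1, j) = 2 a(n+1) + 2^(n+1) - 2,
   from which the closed form and the rational generating function follow.
   Independently, splitting an occurrence of p by the relative order of its
   entries shows that containing p means containing one of six classical
   patterns. *)

Definition occurs (m : nat) (w : nat -> nat) : Prop :=
  exists i1 i2 i3 i4,
    [/\ i1 < i2, i2 < i3, i3 < i4, i4 < m & w i2 < w i1 /\ w i3 < w i4].

Definition updown (m k : nat) (w : nat -> nat) : Prop :=
  forall i i', i < i' -> i' < m -> (i' < k -> w i < w i') /\ (k <= i -> w i' < w i).

Definition inj_on (m : nat) (w : nat -> nat) : Prop :=
  forall i i', i < m -> i' < m -> w i = w i' -> i = i'.

Definition ins_min (j : nat) (w : nat -> nat) (i : nat) : nat :=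
  if i == j then 0 else (w (unbump j i)).+1.

Lemma ins_min_eq0 j w i : (ins_min j w i == 0) = (i == j).
Proof. by rewrite /ins_min; case: (i == j). Qed.

Lemma ins_min_eq j w : ins_min j w j = 0.
Proof. by rewrite /ins_min eqxx. Qed.

Lemma ins_min_neq j w i : i != j -> ins_min j w i = (w (unbump j i)).+1.
Proof. by rewrite /ins_min => /negbTE ->. Qed.

Lemma ins_min_lt j w i : i < j -> ins_min j w i = (w i).+1.
Proof.
by move=> lt_ij; rewrite ins_min_neq ?ltn_eqF // /unbump ltnNge (ltnW lt_ij) subn0.
Qed.

Lemma ins_min_gt j w i : j < i -> ins_min j w i = (w i.-1).+1.
Proof. by move=> lt_ji; rewrite ins_min_neq ?gtn_eqF // /unbump lt_ji /= subn1. Qed.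

Lemma ins_min_bump j w i : ins_min j w (bump j i) = (w i).+1.
Proof. by rewrite ins_min_neq ?bumpK // eq_sym neq_bump. Qed.

Lemma occurs_ins_min j m w : occurs m w -> occurs m.+1 (ins_min j w).
Proof.
move=> [i1 [i2 [i3 [i4 [lt12 lt23 lt34 lt4m [lt21 lt34']]]]]].
exists (bump j i1), (bump j i2), (bump j i3), (bump j i4).
by rewrite !ins_min_bump /bump; split; lia.
Qed.

Lemma occurs_del_min j m w i1 i2 i3 i4 : j <= m ->
  [/\ i1 < i2, i2 < i3, i3 < i4 & i4 < m.+1] ->
  ins_min j w i2 < ins_min j w i1 -> ins_min j w i3 < ins_min j w i4 ->
  [&& i1 != j, i2 != j, i3 != j & i4 != j] -> occurs m w.
Proof.
move=> le_jm [lt12 lt23 lt34 lt4m] lt21 lt34' /and4P [ne1 ne2 ne3 ne4].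
move: lt21 lt34'; rewrite !ins_min_neq // => lt21 lt34'.
exists (unbump j i1), (unbump j i2), (unbump j i3), (unbump j i4).
by split; rewrite ?ltnS // /unbump; lia.
Qed.

Lemma ins_min_pos_neq j w i i' : ins_min j w i < ins_min j w i' -> i' != j.
Proof. by move=> lt_ii'; rewrite -(ins_min_eq0 j w) -lt0n (leq_ltn_trans _ lt_ii'). Qed.

(* A minimum in first position could only play the role of 1 in an
   occurrence, but 1 lies above 2; so it never takes part in one. *)
Lemma occurs_ins_first m w : occurs m.+1 (ins_min 0 w) <-> occurs m w.
Proof.
split; last exact: occurs_ins_min.
move=> [i1 [i2 [i3 [i4 [lt12 lt23 lt34 lt4m [lt21 lt34']]]]]].
have ne1 := ins_min_pos_neq lt21.
by apply: (occurs_del_min _ _ lt21 lt34') => //; apply/and4P; split; lia.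
Qed.

(* Symmetrically, a minimum in last position could only play 4, which lies
   above 3. *)
Lemma occurs_ins_last m w : occurs m.+1 (ins_min m w) <-> occurs m w.
Proof.
split; last exact: occurs_ins_min.
move=> [i1 [i2 [i3 [i4 [lt12 lt23 lt34 lt4m [lt21 lt34']]]]]].
have ne4 := ins_min_pos_neq lt34'.
by apply: (occurs_del_min _ _ lt21 lt34') => //; apply/and4P; split; lia.
Qed.

(* A minimum at an inner position j forbids any descent before j (it would
   form a 21 with j and the last letter as 34) and any ascent after j (with
   the first letter and j as 21); conversely such a word has no occurrence. *)
Lemma avoids_ins_inner j m w : 0 < j < m -> inj_on m w ->
  ~ occurs m.+1 (ins_min j w) <-> updown m j w.
Proof.
move=> /andP [j_gt0 lt_jm] w_inj; split.
  move=> no_occ i i' lt_ii' lt_i'm.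
  have ne_ii' : w i <> w i' by move/w_inj; lia.
  split=> [lt_i'j | le_ji]; case: (ltngtP (w i) (w i')) => // lt_w; case: no_occ.
    exists i, i', j, m; rewrite (ins_min_lt _ (ltn_trans lt_ii' lt_i'j)).
    by rewrite (ins_min_lt _ lt_i'j) ins_min_eq (ins_min_gt _ lt_jm); split; lia.
  exists 0, j, i.+1, i'.+1; rewrite ins_min_eq (ins_min_lt _ j_gt0).
  have lt_ji1 : j < i.+1 by lia.
  have lt_ji'1 : j < i'.+1 by lia.
  by rewrite (ins_min_gt _ lt_ji1) (ins_min_gt _ lt_ji'1) /=; split; lia.
move=> ud [i1 [i2 [i3 [i4 [lt12 lt23 lt34 lt4m [lt21 lt34']]]]]].
case: (ltnP i2 j) => [lt2j | le_j2].
  move: lt21; rewrite !ins_min_lt //; last exact: ltn_trans lt12 lt2j.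
  have [inc _] := ud i1 i2 lt12 ltac:(lia); have := inc lt2j; lia.
move: lt34'; rewrite !(@ins_min_gt j) //; try lia.
have [_ dec] := ud i3.-1 i4.-1 ltac:(lia) ltac:(lia); have := dec ltac:(lia); lia.
Qed.

Lemma updown_ins_first m k w : 0 < m ->
  updown m.+1 k (ins_min 0 w) <-> 0 < k /\ updown m k.-1 w.
Proof.
move=> m_gt0; split.
  move=> ud; have k_gt0 : 0 < k.
    case: (posnP k) => // k0; have [_ dec] := ud 0 1 isT ltac:(lia).
    by have := dec ltac:(lia); rewrite ins_min_eq.
  split=> // i i' lt_ii' lt_i'm; have := ud i.+1 i'.+1 ltac:(lia) ltac:(lia).
  rewrite !ins_min_gt //= => -[inc dec].
  by split=> ?; [have := inc ltac:(lia) | have := dec ltac:(lia)]; lia.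
move=> [k_gt0 ud] i i' lt_ii' lt_i'm; rewrite (ins_min_gt _ (_ : 0 < i')); last by lia.
case: (posnP i) => [-> | i_gt0]; first by rewrite ins_min_eq; split=> //; lia.
have [inc dec] := ud i.-1 i'.-1 ltac:(lia) ltac:(lia).
by rewrite ins_min_gt //; split=> ?; [have := inc ltac:(lia) | have := dec ltac:(lia)]; lia.
Qed.

Lemma updown_ins_last m k w : 0 < m ->
  updown m.+1 k (ins_min m w) <-> k <= m /\ updown m k w.
Proof.
move=> m_gt0; split.
  move=> ud; have le_km : k <= m.
    case: (leqP k m) => // lt_mk; have [inc _] := ud 0 m m_gt0 ltac:(lia).
    by have := inc lt_mk; rewrite ins_min_eq.
  split=> // i i' lt_ii' lt_i'm; have := ud i i' lt_ii' ltac:(lia).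
  by rewrite !ins_min_lt //; lia.
move=> [le_km ud] i i' lt_ii' lt_i'm; have lt_im : i < m by lia.
rewrite (ins_min_lt _ lt_im).
case: (leqP m i') => [le_mi' | lt_i'm'].
  have -> : i' = m by lia.
  by rewrite ins_min_eq; split=> //; lia.
by rewrite ins_min_lt //; apply: ud.
Qed.

Lemma updown_ins_inner m j k w : 0 < j < m -> ~ updown m.+1 k (ins_min j w).
Proof.
move=> j_inner ud; case: (ltnP j k) => lt_jk.
  have [inc _] := ud 0 j ltac:(lia) ltac:(lia).
  by have := inc lt_jk; rewrite ins_min_eq.
have [_ dec] := ud j m ltac:(lia) ltac:(lia).
by have := dec lt_jk; rewrite ins_min_eq.
Qed.

Lemma occurs_eq_on m w w' :
  (forall i, i < m -> w i = w' i) -> occurs m w -> occurs m w'.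
Proof.
move=> eq_ww' [i1 [i2 [i3 [i4 [lt12 lt23 lt34 lt4m [lt21 lt34']]]]]].
by exists i1, i2, i3, i4; rewrite -!eq_ww' //; lia.
Qed.

Lemma updown_eq_on m k w w' :
  (forall i, i < m -> w i = w' i) -> updown m k w -> updown m k w'.
Proof. by move=> eq_ww' ud i i' lt_ii' lt_i'm; rewrite -!eq_ww' //; [exact: ud | lia]. Qed.

Definition occursb (m : nat) (w : nat -> nat) : bool :=
  [exists i1 : 'I_m, exists i2 : 'I_m, exists i3 : 'I_m, exists i4 : 'I_m,
     [&& i1 < i2, i2 < i3, i3 < i4, w i2 < w i1 & w i3 < w i4]].

Lemma occursP m w : reflect (occurs m w) (occursb m w).
Proof.
apply: (iffP idP).
  case/existsP=> i1 /existsP [i2 /existsP [i3 /existsP [i4 /and5P [? ? ? ? ?]]]].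
  by exists i1, i2, i3, i4; split.
move=> [i1 [i2 [i3 [i4 [lt12 lt23 lt34 lt4m [lt21 lt34']]]]]].
have lt1m : i1 < m by lia.
have lt2m : i2 < m by lia.
have lt3m : i3 < m by lia.
apply/existsP; exists (Ordinal lt1m); apply/existsP; exists (Ordinal lt2m).
apply/existsP; exists (Ordinal lt3m); apply/existsP; exists (Ordinal lt4m).
exact/and5P.
Qed.

Definition updownb (m k : nat) (w : nat -> nat) : bool :=
  [forall i : 'I_m, forall i' : 'I_m,
     (i < i') ==> ((i' < k) ==> (w i < w i')) && ((k <= i) ==> (w i' < w i))].

Lemma updownP m k w : reflect (updown m k w) (updownb m k w).
Proof.
apply: (iffP idP).
  move=> /forallP ud i i' lt_ii' lt_i'm.
  have lt_im : i < m by lia.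
  have /forallP /(_ (Ordinal lt_i'm)) := ud (Ordinal lt_im).
  by rewrite /= lt_ii' => /andP [/implyP ? /implyP ?].
move=> ud; apply/forallP => i; apply/forallP => i'; apply/implyP => lt_ii'.
by have [inc dec] := ud i i' lt_ii' (ltn_ord i'); apply/andP; split; apply/implyP.
Qed.

Lemma occursb_eq_on m w w' :
  (forall i, i < m -> w i = w' i) -> occursb m w = occursb m w'.
Proof.
move=> eq_ww'; apply/occursP/occursP; apply: occurs_eq_on => // i lt_im.
by rewrite eq_ww'.
Qed.

Lemma updownb_eq_on m k w w' :
  (forall i, i < m -> w i = w' i) -> updownb m k w = updownb m k w'.
Proof.
move=> eq_ww'; apply/updownP/updownP; apply: updown_eq_on => // i lt_im.
by rewrite eq_ww'.
Qed.

Lemma updownb_ins_first m k w : 0 < m ->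
  updownb m.+1 k (ins_min 0 w) = (0 < k) && updownb m k.-1 w.
Proof.
move=> m_gt0; apply/updownP/andP => [/(updown_ins_first k w m_gt0) [-> /updownP] // |].
by move=> [k_gt0 /updownP ud]; apply/updown_ins_first.
Qed.

Lemma updownb_ins_last m k w : 0 < m ->
  updownb m.+1 k (ins_min m w) = (k <= m) && updownb m k w.
Proof.
move=> m_gt0; apply/updownP/andP => [/(updown_ins_last k w m_gt0) [-> /updownP] // |].
by move=> [le_km /updownP ud]; apply/updown_ins_last.
Qed.

Definition word n (s : 'S_n) (i : nat) : nat :=
  if insub i is Some x then val (s x) else 0.

Lemma wordE n (s : 'S_n) (x : 'I_n) : word s x = s x.
Proof. by rewrite /word valK. Qed.

Lemma word_inj n (s : 'S_n) : inj_on n (word s).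
Proof.
move=> i i' lt_in lt_i'n.
rewrite -[i]/(val (Ordinal lt_in)) -[i']/(val (Ordinal lt_i'n)) !wordE.
by move/val_inj/perm_inj => [].
Qed.

Lemma word_lift_perm n (j : 'I_n.+1) (s : 'S_n) i : i < n.+1 ->
  word (lift_perm j ord0 s) i = ins_min j (word s) i.
Proof.
move=> lt_in; rewrite -[i]/(val (Ordinal lt_in)) wordE.
case: (unliftP j (Ordinal lt_in)) => [k | ] ->.
  by rewrite lift_perm_lift /= ins_min_bump wordE.
by rewrite lift_perm_id ins_min_eq.
Qed.

Lemma card_set_sum (T : finType) (P : pred T) : #|[set x | P x]| = \sum_(x : T) P x.
Proof. by rewrite -sum1_card big_mkcond; apply: eq_bigr => x _; rewrite inE. Qed.

Lemma card_by_min_position n (R : pred 'S_n.+1) :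
  #|[set s | R s]| = \sum_(j < n.+1) #|[set s : 'S_n | R (lift_perm j ord0 s)]|.
Proof.
pose ins (x : 'I_n.+1 * 'S_n) := lift_perm x.1 ord0 x.2.
have ins_inj : injective ins.
  move=> [j1 s1] [j2 s2]; rewrite /ins /= => eq_ins.
  have eq_j : j1 = j2.
    by apply: (@perm_inj _ (lift_perm j1 ord0 s1)); rewrite lift_perm_id eq_ins lift_perm_id.
  subst j2; congr pair; apply/permP => k; apply: (@lift_inj _ ord0).
  by rewrite -!(lift_perm_lift j1 ord0) eq_ins.
have ins_bij : bijective ins.
  by apply: inj_card_bij => //; rewrite card_prod card_ord !card_Sn factS.
transitivity #|[set x | R (ins x)]|.
  by rewrite -(on_card_preimset (onW_bij _ ins_bij)); apply: eq_card => x; rewrite !inE.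
by rewrite card_set_sum (eq_bigr _ (fun j _ => card_set_sum _)) pair_bigA.
Qed.

Lemma sum_first_inner_last (G : nat -> nat) n :
  \sum_(j < n.+2) G j = G 0 + \sum_(1 <= j < n.+1) G j + G n.+1.
Proof. by rewrite -(big_mkord xpredT) big_nat_recl // big_nat_recr //= big_add1 addnA. Qed.

Lemma card_word_by_min n (P : (nat -> nat) -> bool) :
  (forall w w', (forall i, i < n.+2 -> w i = w' i) -> P w = P w') ->
  let count_at j := #|[set s : 'S_n.+1 | P (ins_min j (word s))]| in
  #|[set s : 'S_n.+2 | P (word s)]| =
  count_at 0 + \sum_(1 <= j < n.+1) count_at j + count_at n.+1.
Proof.
move=> P_eq_on count_at; rewrite card_by_min_position -sum_first_inner_last.
apply: eq_bigr => j _; apply: eq_card => s; rewrite !inE.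
by apply: P_eq_on => i; apply: word_lift_perm.
Qed.

Definition avoiders n := #|[set s : 'S_n | ~~ occursb n (word s)]|.
Definition updowns n k := #|[set s : 'S_n | updownb n k (word s)]|.

Lemma card_set_andb (T : finType) (b : bool) (P : pred T) :
  #|[set x | b && P x]| = b * #|[set x | P x]|.
Proof. by case: b; rewrite ?mul1n ?mul0n //; apply: eq_card0 => x; rewrite inE. Qed.

Lemma card_set_all_perm n (P : pred 'S_n) : (forall s, P s) -> #|[set s | P s]| = n`!.
Proof. by move=> P_all; rewrite -card_Sn; apply: eq_card => s; rewrite inE P_all. Qed.

(* The minimum at either end contributes a(n+1), at an inner position j
   it contributes the [updown] permutations at j. *)
Lemma avoiders_rec n :
  avoiders n.+2 = 2 * avoiders n.+1 + \sum_(1 <= j < n.+1) updowns n.+1 j.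
Proof.
rewrite {1}/avoiders (card_word_by_min (n := n) (P := fun w => ~~ occursb n.+2 w));
  last by move=> w w' eq_ww'; rewrite (occursb_eq_on eq_ww').
have avoid_first : #|[set s : 'S_n.+1 | ~~ occursb n.+2 (ins_min 0 (word s))]| =
                   avoiders n.+1.
  apply: eq_card => s; rewrite !inE; congr negb.
  by apply/occursP/occursP => /occurs_ins_first.
have avoid_last : #|[set s : 'S_n.+1 | ~~ occursb n.+2 (ins_min n.+1 (word s))]| =
                  avoiders n.+1.
  apply: eq_card => s; rewrite !inE; congr negb.
  by apply/occursP/occursP => /occurs_ins_last.
have avoid_inner j : 0 < j < n.+1 ->
    #|[set s : 'S_n.+1 | ~~ occursb n.+2 (ins_min j (word s))]| = updowns n.+1 j.
  move=> j_inner; apply: eq_card => s; rewrite !inE.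
  have ins_iff := avoids_ins_inner j_inner (@word_inj _ s).
  apply/idP/updownP => [/negP no_occ | ud]; first by apply/ins_iff => /occursP.
  by apply/negP => /occursP; apply/ins_iff.
by rewrite (eq_big_nat _ _ avoid_inner); move: avoid_first avoid_last; lia.
Qed.

(* The minimum of an [updown] permutation is its first letter (then the
   increasing part is nonempty) or its last letter (then the decreasing part
   is nonempty). *)
Lemma updowns_rec n k :
  updowns n.+2 k = (0 < k) * updowns n.+1 k.-1 + (k <= n.+1) * updowns n.+1 k.
Proof.
rewrite /updowns (card_word_by_min (n := n) (P := updownb n.+2 k));
  last exact: updownb_eq_on.
rewrite big1_seq ?addn0 => [|j /andP [_]]; last first.
  rewrite mem_index_iota => j_inner; apply: eq_card0 => s; rewrite inE.
  by apply/negbTE/updownP/updown_ins_inner.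
rewrite -!card_set_andb; congr (_ + _); apply: eq_card => s.
  by rewrite !inE updownb_ins_first.
by rewrite !inE updownb_ins_last.
Qed.

Lemma updowns_short n k : n < 2 -> updowns n k = 1.
Proof.
move=> lt_n2; rewrite /updowns card_set_all_perm; first by case: n lt_n2 => [|[]].
by move=> s; apply/updownP => i i'; lia.
Qed.

(* An [updown] permutation at k is determined by the set of its first k
   letters, which is arbitrary. *)
Lemma updowns_binomial n k : k <= n -> updowns n k = 'C(n, k).
Proof.
elim: n k => [|n IH] k le_kn; first by rewrite updowns_short //; case: k le_kn.
case: n IH le_kn => [|n] IH le_kn; first by rewrite updowns_short //; case: k le_kn => [|[]].
rewrite updowns_rec; case: k le_kn => [|k] le_kn; first by rewrite IH // !bin0.
have last_term : (k.+1 <= n.+1) * updowns n.+1 k.+1 = 'C(n.+1, k.+1).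
  have [le_k1 | lt_n1] := leqP k.+1 n.+1; first by rewrite mul1n IH.
  by rewrite mul0n bin_small.
by rewrite /= mul1n IH // last_term binS addnC.
Qed.

(* The binomial theorem at 1 + 1, without its two extreme terms. *)
Lemma sum_inner_binomial n : \sum_(1 <= j < n.+1) 'C(n.+1, j) = 2 ^ n.+1 - 2.
Proof.
have pow2 : 2 ^ n.+1 = \sum_(j < n.+2) 'C(n.+1, j).
  by rewrite -[2]/(1 + 1) expnDn; apply: eq_bigr => j _; rewrite !exp1n !muln1.
by rewrite pow2 sum_first_inner_last bin0 binn; lia.
Qed.

Lemma avoiders_short n : n < 4 -> avoiders n = n`!.
Proof.
move=> lt_n4; apply: card_set_all_perm => s.
by apply/negP => /occursP [i1 [i2 [i3 [i4 [? ? ? ? _]]]]]; lia.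
Qed.

Lemma avoiders_rec_closed n : avoiders n.+2 = 2 * avoiders n.+1 + 2 ^ n.+1 - 2.
Proof.
have inner : \sum_(1 <= j < n.+1) updowns n.+1 j = 2 ^ n.+1 - 2.
  rewrite -sum_inner_binomial; apply: eq_big_nat => j /andP [_ lt_jn].
  by rewrite updowns_binomial // ltnW.
have pow2_ge2 : 2 <= 2 ^ n.+1 by rewrite expnS leq_pmulr // expn_gt0.
by rewrite avoiders_rec inner; lia.
Qed.

Lemma occursb_wordP n (s : 'S_n) :
  reflect (exists o1 o2 o3 o4 : 'I_n,
             [/\ o1 < o2, o2 < o3, o3 < o4 & s o2 < s o1 /\ s o3 < s o4])
          (occursb n (word s)).
Proof.
apply: (iffP existsP) => [[o1 /existsP [o2 /existsP [o3 /existsP [o4]]]] | ].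
  by rewrite !wordE => /and5P [? ? ? ? ?]; exists o1, o2, o3, o4.
move=> [o1 [o2 [o3 [o4 [lt12 lt23 lt34 [lt21 lt34']]]]]].
exists o1; apply/existsP; exists o2; apply/existsP; exists o3; apply/existsP; exists o4.
by rewrite !wordE lt12 lt23 lt34 lt21 lt34'.
Qed.

Definition quad n (o1 o2 o3 o4 : 'I_n) (x : nat) : 'I_n :=
  nth o1 [:: o1; o2; o3; o4] x.

Lemma quad_incr n (o1 o2 o3 o4 : 'I_n) : o1 < o2 -> o2 < o3 -> o3 < o4 ->
  forall x y, x < y -> y < 4 -> quad o1 o2 o3 o4 x < quad o1 o2 o3 o4 y.
Proof.
by rewrite /quad => lt12 lt23 lt34 [|[|[|[|x]]]] [|[|[|[|y]]]] //= _ _; lia.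
Qed.

Lemma inord4 k (lt_k4 : k < 4) : @inord 3 k = Ordinal lt_k4.
Proof. by apply: val_inj; rewrite /= inordK. Qed.

Lemma pop_contains_occursb n (s : 'S_n) : pop_contains s p4 = occursb n (word s).
Proof.
rewrite /pop_contains /p4 /= (inord4 (isT : 0 < 4)) (inord4 (isT : 1 < 4)).
rewrite (inord4 (isT : 2 < 4)) (inord4 (isT : 3 < 4)).
apply/existsP/occursb_wordP => [[f /and4P [/forallP f_incr lt10 lt23 _]] | ].
  have f_lt (x y : 'I_4) : x < y -> f x < f y.
    by have /forallP /(_ y) /implyP := f_incr x.
  exists (f (Ordinal (isT : 0 < 4))), (f (Ordinal (isT : 1 < 4))).
  by exists (f (Ordinal (isT : 2 < 4))), (f (Ordinal (isT : 3 < 4))); split; try apply: f_lt.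
move=> [o1 [o2 [o3 [o4 [lt12 lt23 lt34 [lt21 lt34']]]]]].
exists [ffun x : 'I_4 => quad o1 o2 o3 o4 x]; rewrite !ffunE /= lt21 lt34' !andbT.
apply/forallP => x; apply/forallP => y; apply/implyP => lt_xy.
by rewrite !ffunE; apply: quad_incr.
Qed.

Lemma classical_contains_occursb n (s : 'S_n) q :
  3 < size q -> nth 0 q 1 < nth 0 q 0 -> nth 0 q 2 < nth 0 q 3 ->
  classical_contains s q -> occursb n (word s).
Proof.
move=> lt3q desc asc /existsP [f /forallP emb].
have emb_at (x y : 'I_(size q)) :
    (x < y -> f x < f y) /\ ((s (f x) < s (f y)) = (nth 0 q x < nth 0 q y)).
  by have /forallP /(_ y) /andP [/implyP ? /eqP ?] := emb x.
have lt0q : 0 < size q by lia.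
have lt1q : 1 < size q by lia.
have lt2q : 2 < size q by lia.
apply/occursb_wordP.
exists (f (Ordinal lt0q)), (f (Ordinal lt1q)), (f (Ordinal lt2q)), (f (Ordinal lt3q)).
have [lt01 _] := emb_at (Ordinal lt0q) (Ordinal lt1q).
have [lt12 _] := emb_at (Ordinal lt1q) (Ordinal lt2q).
have [lt23 ord23] := emb_at (Ordinal lt2q) (Ordinal lt3q).
have [_ ord10] := emb_at (Ordinal lt1q) (Ordinal lt0q).
by rewrite ord10 ord23; split; [apply: lt01 | apply: lt12 | apply: lt23 |].
Qed.

Lemma classical_contains_quad n (s : 'S_n) q (o1 o2 o3 o4 : 'I_n) :
  size q = 4 -> o1 < o2 -> o2 < o3 -> o3 < o4 ->
  (forall x y, x < 4 -> y < 4 ->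
     (s (quad o1 o2 o3 o4 x) < s (quad o1 o2 o3 o4 y)) = (nth 0 q x < nth 0 q y)) ->
  classical_contains s q.
Proof.
move=> size_q lt12 lt23 lt34 same_order; apply/existsP.
exists [ffun x : 'I_(size q) => quad o1 o2 o3 o4 x].
have lt_q4 (x : 'I_(size q)) : x < 4 by rewrite -size_q.
apply/forallP => x; apply/forallP => y; rewrite !ffunE same_order ?lt_q4 // eqxx andbT.
by apply/implyP => lt_xy; apply: quad_incr.
Qed.

(* The linear extensions of p, written as classical patterns. *)
Definition p4_patterns : seq (seq nat) :=
  [:: [:: 2; 1; 3; 4]; [:: 3; 1; 2; 4]; [:: 4; 1; 2; 3];
      [:: 3; 2; 1; 4]; [:: 4; 2; 1; 3]; [:: 4; 3; 1; 2]].

(* An occurrence of p falls in one of six classes according to how the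
   letters at positions 1, 2 compare with those at positions 3, 4. *)
Lemma occursb_classical n (s : 'S_n) :
  occursb n (word s) = has (classical_contains s) p4_patterns.
Proof.
apply/idP/idP; last first.
  by rewrite /= orbF; case/or4P => [|||/or3P []]; apply: classical_contains_occursb.
move/occursb_wordP => [o1 [o2 [o3 [o4 [lt12 lt23 lt34 [lt21 lt34']]]]]].
have s_neq (x y : 'I_n) : x < y -> (s x : nat) <> s y.
  by move=> lt_xy /val_inj /perm_inj eq_xy; move: lt_xy; rewrite eq_xy ltnn.
have ne13 := s_neq o1 o3 ltac:(lia).
have ne14 := s_neq o1 o4 ltac:(lia).
have ne23 := s_neq o2 o3 lt23.
have ne24 := s_neq o2 o4 ltac:(lia).
have realised q : q \in p4_patterns ->
    [/\ (s o1 < s o3) = (nth 0 q 0 < nth 0 q 2), (s o1 < s o4) = (nth 0 q 0 < nth 0 q 3),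
        (s o2 < s o3) = (nth 0 q 1 < nth 0 q 2) & (s o2 < s o4) = (nth 0 q 1 < nth 0 q 3)] ->
    has (classical_contains s) p4_patterns.
  move=> q_in cross; apply/hasP; exists q => //.
  have size_q : size q = 4 by move: q_in; rewrite !inE => /or4P [|||/or3P []] /eqP ->.
  apply: (classical_contains_quad size_q lt12 lt23 lt34).
  move: q_in cross; rewrite /quad !inE => /or4P [|||/or3P []] /eqP -> /= [c13 c14 c23 c24];
  by move=> [|[|[|[|x]]]] [|[|[|[|y]]]] //= _ _; lia.
case: (ltngtP (s o1) (s o3)) => [c13 | c31 | //].
  by apply: (realised [:: 2; 1; 3; 4]) => //=; split; lia.
case: (ltngtP (s o1) (s o4)) => [c14 | c41 | //].
  case: (ltngtP (s o2) (s o3)) => [c23 | c32 | //].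
    by apply: (realised [:: 3; 1; 2; 4]) => //=; split; lia.
  by apply: (realised [:: 3; 2; 1; 4]) => //=; split; lia.
case: (ltngtP (s o2) (s o3)) => [c23 | c32 | //].
  by apply: (realised [:: 4; 1; 2; 3]) => //=; split; lia.
case: (ltngtP (s o2) (s o4)) => [c24 | c42 | //].
  by apply: (realised [:: 4; 2; 1; 3]) => //=; split; lia.
by apply: (realised [:: 4; 3; 1; 2]) => //=; split; lia.
Qed.

Lemma pop_avoids_classical n (s : 'S_n) :
  pop_avoids s p4 = all (classical_avoids s) p4_patterns.
Proof. by rewrite /pop_avoids pop_contains_occursb occursb_classical -all_predC. Qed.

Lemma a_avoiders n : a n = avoiders n.
Proof. by apply: eq_card => s; rewrite !inE /pop_avoids pop_contains_occursb. Qed.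

Local Open Scope ring_scope.

Lemma natz_exp2 k : (2 ^ k)%N%:Z = 2%:Z ^+ k.
Proof. by rewrite -natz natrX. Qed.

Lemma a_rec n : (1 <= n)%N ->
  (a n)%:Z = 2%:Z * (a n.-1)%:Z + 2%:Z ^+ n.-1 - 2%:Z.
Proof.
case: n => [// | [|n]] _; first by rewrite !a_avoiders !avoiders_short.
have pow2_ge2 : (2 <= 2 ^ n.+1)%N by rewrite expnS leq_pmulr // expn_gt0.
by rewrite !a_avoiders avoiders_rec_closed /= -natz_exp2; lia.
Qed.

Lemma a_closed n : (1 <= n)%N -> (a n)%:Z = (n%:Z - 2%:Z) * 2%:Z ^+ n.-1 + 2%:Z.
Proof.
elim: n => [// | n IH _].
case: n IH => [_ | n IH]; first by rewrite a_avoiders avoiders_short.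
by rewrite a_rec // IH //= exprS; lia.
Qed.

(* The linear recurrence encoded by the denominator (1 - x)(1 - 2x)^2. *)
Lemma a_lin_rec n :
  (a n.+3)%:Z = 5%:Z * (a n.+2)%:Z - 8%:Z * (a n.+1)%:Z + 4%:Z * (a n)%:Z.
Proof.
case: n => [|n]; last by rewrite !a_closed //= !exprS; lia.
by rewrite [a 0]a_avoiders avoiders_short // !a_closed //= !exprS expr0; lia.
Qed.

Lemma gf_den_coef i : gf_den`_i = nth 0 [:: 1; -5; 8; -4] i.
Proof.
have -> : gf_den = 1 - 5%:R *: 'X + 8%:R *: 'X^2 - 4%:R *: 'X^3.
  by rewrite /gf_den -!mul_polyC !polyC_natr; ring.
rewrite !(coefD, coefN, coefZ, coefXn, coefX, coef1).
by case: i => [|[|[|[|i]]]]; rewrite /= ?nth_nil.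
Qed.

Lemma gf_num_coef i : gf_num`_i = nth 0 [:: 1; -4; 5] i.
Proof.
rewrite /gf_num !(coefD, coefN, coefZ, coefXn, coefX, coef1).
by case: i => [|[|[|i]]]; rewrite /= ?nth_nil.
Qed.

(* The generating function identity, coefficientwise: the first three
   coefficients are checked directly, the others vanish by [a_lin_rec]. *)
Lemma a_gf n : \sum_(i < n.+1) gf_den`_i * (a (n - i)%N)%:Z = gf_num`_n.
Proof.
under eq_bigr do rewrite gf_den_coef.
rewrite gf_num_coef.
rewrite -(big_mkord xpredT (fun i => nth 0 [:: 1; -5; 8; -4] i * (a (n - i)%N)%:Z)).
have a0 : (a 0)%:Z = 1 by rewrite a_avoiders avoiders_short.
case: n => [|[|[|n]]]; rewrite !big_nat_recl //.
- by rewrite big_geq //= a0 addr0.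
- by rewrite big_geq //= a0 a_closed // expr0 addr0; lia.
- by rewrite big_geq //= a0 !a_closed // expr0 expr1 addr0; lia.
rewrite big1 => [|i _]; last by rewrite /= nth_nil mul0r.
by rewrite /= nth_nil !subSS !subn0 a_lin_rec; lia.
Qed.

Theorem theorem3p5 :
  (* avoiding p is equivalent to avoiding 2134, 3124, 4123, 3214, 4213, 4312 *)
  (forall (n : nat) (s : 'S_n),
     pop_avoids s p4 =
     all (classical_avoids s)
       [:: [:: 2; 1; 3; 4]; [:: 3; 1; 2; 4]; [:: 4; 1; 2; 3];
           [:: 3; 2; 1; 4]; [:: 4; 2; 1; 3]; [:: 4; 3; 1; 2]]%N) /\
  a 0 = 1%N /\
  (forall n : nat, (1 <= n)%N ->
     (a n)%:Z = 2%:Z * (a n.-1)%:Z + 2%:Z ^+ n.-1 - 2%:Z) /\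
  (forall n : nat, (1 <= n)%N ->
     (a n)%:Z = (n%:Z - 2%:Z) * 2%:Z ^+ n.-1 + 2%:Z) /\
  (* sum_n a(n) x^n = gf_num / gf_den as formal power series, i.e.
     gf_den * (sum_n a(n) x^n) = gf_num coefficientwise *)
  (forall n : nat,
     \sum_(i < n.+1) gf_den`_i * (a (n - i)%N)%:Z = gf_num`_n).
Proof.
split; first exact: pop_avoids_classical.
split; first by rewrite a_avoiders avoiders_short.
split; first exact: a_rec.
split; first exact: a_closed.
exact: a_gf.
Qed.
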